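(* Let $\Gamma$ be a finitely generated group, $I$ an index set, and $\rho_i:\Gamma\to G_i$ ($i\in I$) surjective homomorphisms onto finite groups, such that $\Gamma$ has Property $(\tau)$ with respect to the family $(\ker\rho_i)_{i\in I}$. Let $S=S^{-1}$ be a finite symmetric generating set of $\Gamma$; for $N\geq1$ let $W=W_N=S^N$ be the set of words of length $N$ in the alphabet $S$, and for $w=(s_1,\ldots,s_N)$ let $F_w=s_1\cdots s_N\in\Gamma$. Assume there is a word of odd length $c$ in the alphabet $S$ whose value in $\Gamma$ is the identity. Then there exists $\alpha>0$, depending only on $\Gamma$, $|S|$, the $(\tau)$-constant for $(S,\Gamma,(\ker\rho_i))$ and $c$, such that for every $i\in I$, every finite-dimensional complex representation $\pi:\Gamma\to GL(V)$ that factors through $\rho_i$ and does not contain the trivial representation, and all vectors $e,f\in V$, we have for all $N\geq1$ $$\Big|\sum_{w\in W}\langle\pi(F_w)e,f\rangle\Big|\leq\|e\|\,\|f\|\,|W|^{1-\alpha},\qquad\Big|\sum_{w\in W}\operatorname{Tr}\pi(F_w)\Big|\leq(\dim\pi)|W|^{1-\alpha},$$ where $\langle\cdot,\cdot\rangle$ is a $\Gamma$-invariant inner product on $V$.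
   Context: $\Gamma$ has Property $(\tau)$ with respect to a family $(N_i)$ of finite-index normal subgroups if there is $\varepsilon>0$ such that for every unitary representation $\varpi$ of $\Gamma$ that factors through some $\Gamma/N_i$ and does not contain the trivial representation, and every nonzero vector $v$, one has $\max_{s\in S}\|\varpi(s)v-v\|\geq\varepsilon\|v\|$; the $(\tau)$-constant is the largest such $\varepsilon$ (for the generating set $S$). *)

From HB Require Import structures.
From mathcomp Require Import all_boot all_order all_algebra all_fingroup.
From mathcomp Require Import reals exp complex.
Set Implicit Arguments. Unset Strict Implicit. Unset Printing Implicit Defensive.
Import GRing.Theory Num.Theory.
Local Open Scope ring_scope.
Local Open Scope complex_scope.

Record Grp := {
  gcar :> Type;
  gmul : gcar -> gcar -> gcar;
  gone : gcar;
  ginv : gcar -> gcar;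
  gmulA : associative gmul;
  gmul1g : left_id gone gmul;
  gmulVg : left_inverse gone ginv gmul }.

Section Defs.
Variable G : Grp.

Definition gprod (l : seq G) : G := foldr (@gmul G) (@gone G) l.

Definition is_hom (gT : finGroupType) (rho : G -> gT) :=
  forall x y, rho (gmul x y) = (rho x * rho y)%g.

(* the letters of the alphabet S are s a, a : 'I_k (s injective, so |S| = k);
   a word of length N is w : {ffun 'I_N -> 'I_k}, and F_w = s_(w 0) ... s_(w (N-1)) *)
Definition word_val (k N : nat) (s : 'I_k -> G) (w : {ffun 'I_N -> 'I_k}) : G :=
  gprod [seq s (w j) | j <- enum 'I_N].

Definition symmetric_set (k : nat) (s : 'I_k -> G) :=
  forall a, exists b, s b = ginv (s a).

Definition generates (k : nat) (s : 'I_k -> G) :=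
  forall x : G, exists l : seq ('I_k * bool),
    x = gprod [seq if b.2 then s b.1 else ginv (s b.1) | b <- l].

Variable R : realType.

Definition adjmx (m n : nat) (A : 'M[R[i]]_(m, n)) : 'M[R[i]]_(n, m) :=
  (map_mx conjc A)^T.

Definition mx_rep (n : nat) (pi : G -> 'M[R[i]]_n) :=
  pi (@gone G) = 1%:M /\ forall x y, pi (gmul x y) = pi x *m pi y.

Definition unitary_rep (n : nat) (pi : G -> 'M[R[i]]_n) :=
  mx_rep pi /\ forall x, adjmx (pi x) *m pi x = 1%:M.

Definition vnorm (n : nat) (v : 'cV[R[i]]_n) : R[i] :=
  sqrtC ((adjmx v *m v) 0 0).

Definition no_trivial_sub (n : nat) (pi : G -> 'M[R[i]]_n) :=
  forall v : 'cV[R[i]]_n, (forall x, pi x *m v = v) -> v = 0.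

(* eps is a (tau)-constant for (S, G, (ker rho_i)_i): every (finite-dimensional)
   unitary representation factoring through some G / ker rho_i without
   invariant vectors moves every nonzero v by at least eps ||v|| under some s in S *)
Definition tau_constant (I : Type) (gT : I -> finGroupType)
    (rho : forall i, G -> gT i) (k : nat) (s : 'I_k -> G) (eps : R) :=
  forall (i : I) (n : nat) (varpi : G -> 'M[R[i]]_n),
    unitary_rep varpi ->
    (forall x, rho i x = 1%g -> varpi x = 1%:M) ->
    no_trivial_sub varpi ->
    forall v : 'cV[R[i]]_n, v != 0 ->
      exists a : 'I_k, eps%:C * vnorm v <= vnorm (varpi (s a) *m v - v).

Definition factors_through (gT : finGroupType) (rho : G -> gT)
    (n : nat) (pi : G -> 'M[R[i]]_n) :=
  exists sigma : gT -> 'M[R[i]]_n, forall x, pi x = sigma (rho x).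

Definition ipH (n : nat) (H : 'M[R[i]]_n) (u v : 'cV[R[i]]_n) : R[i] :=
  (adjmx v *m H *m u) 0 0.

Definition normH (n : nat) (H : 'M[R[i]]_n) (v : 'cV[R[i]]_n) : R[i] :=
  sqrtC (ipH H v v).

Definition inner_product_mx (n : nat) (H : 'M[R[i]]_n) :=
  adjmx H = H /\ forall v : 'cV[R[i]]_n, v != 0 -> 0 < ipH H v v.

Definition invariant_ip (n : nat) (H : 'M[R[i]]_n) (pi : G -> 'M[R[i]]_n) :=
  forall x u v, ipH H (pi x *m u) (pi x *m v) = ipH H u v.

End Defs.

(* Conjugating by a square root L of the Gram matrix (L^* L = H) makes pi
   unitary, and the sum of pi(F_w) over the words of length N becomes T^N for
   the self-adjoint operator T = sum_(s in S) pi(s).  Property (tau) gives for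
   every v some s with |pi(s) v - v| >= eps |v|; summing |pi(s) v - v|^2 over S
   bounds Re <T v, v> above by (|S| - eps^2/2) |v|^2.  The odd relator w gives
   2 v = v - (-1)^c pi(w) v, which telescopes along the c letters of w into
   terms pi(.)(v + pi(s) v) and bounds Re <T v, v> below by
   -(|S| - 2/c^2) |v|^2.  By polarization a self-adjoint operator with
   numerical range in [-mu, mu] has norm at most mu, hence
   |<T^N e, f>| <= mu^N |e| |f| and |Tr T^N| <= (dim pi) mu^N.  Finally
   mu^N <= |W|^(1 - alpha) for mu = |S| - delta and
   alpha = ln (|S| / mu) / ln (|S| + 1), where delta > 0 depends only on eps
   and c. *)

From HB Require Import structures.
From mathcomp Require Import all_boot all_order all_algebra all_fingroup.
From mathcomp Require Import reals exp complex.
From mathcomp Require Import sesquilinear spectral.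
From mathcomp Require Import ring lra zify.
Set Implicit Arguments. Unset Strict Implicit. Unset Printing Implicit Defensive.
Import Order.TTheory GRing.Theory Num.Theory.
Local Open Scope ring_scope.
Local Open Scope complex_scope.

Section InnerProduct.
Variable R : realType.
Local Notation C := R[i].
Local Notation Re := complex.Re.

Lemma adjmxM m n p (A : 'M[C]_(m, n)) (B : 'M[C]_(n, p)) :
  adjmx (A *m B) = adjmx B *m adjmx A.
Proof. by rewrite /adjmx map_mxM trmx_mul. Qed.

Lemma adjmxK m n (A : 'M[C]_(m, n)) : adjmx (adjmx A) = A.
Proof. by apply/matrixP => i j; rewrite !mxE conjcK. Qed.

Lemma adjmx1 n : adjmx (1%:M : 'M[C]_n) = 1%:M.
Proof. by apply/matrixP => i j; rewrite !mxE conjc_nat eq_sym. Qed.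

Lemma adjmx_sum n (I : finType) (F : I -> 'M[C]_n) :
  adjmx (\sum_i F i) = \sum_i adjmx (F i).
Proof.
apply/matrixP => i j; rewrite !mxE !summxE rmorph_sum.
by apply: eq_bigr => l _; rewrite !mxE.
Qed.

Lemma adjmx_trC m n (A : 'M[C]_(m, n)) : adjmx A = (A ^t* )%sesqui.
Proof. by apply/matrixP => i j; rewrite !mxE. Qed.

Lemma adjmx_delta n (j : 'I_n) : adjmx (delta_mx j 0 : 'cV[C]_n) = delta_mx 0 j.
Proof. by apply/matrixP => a b; rewrite !mxE conjc_nat andbC. Qed.

Lemma ReD (x y : C) : Re (x + y) = Re x + Re y. Proof. by case: x; case: y. Qed.
Lemma ReN (x : C) : Re (- x) = - Re x. Proof. by case: x. Qed.
Lemma ReJ (x : C) : Re x^* = Re x. Proof. by case: x. Qed.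
Lemma ReMr (t : R) (x : C) : Re (t%:C * x) = t * Re x.
Proof. by case: x => a b /=; rewrite mul0r subr0. Qed.
Lemma Re_sum (I : finType) (F : I -> C) : Re (\sum_i F i) = \sum_i Re (F i).
Proof. by apply: (big_morph _ ReD). Qed.

Definition dotc n (u v : 'cV[C]_n) : C := (adjmx v *m u) 0 0.

Lemma dotcE n (u v : 'cV[C]_n) : dotc u v = \sum_j (v j 0)^* * u j 0.
Proof. by rewrite /dotc mxE; apply: eq_bigr => j _; rewrite !mxE. Qed.

Lemma dotc_dotmx n (u v : 'cV[C]_n) : dotc u v = dotmx u^T v^T.
Proof. by rewrite dotcE dotmxE mxE; apply: eq_bigr => j _; rewrite !mxE mulrC. Qed.

Lemma dotc_adjmx n (A : 'M[C]_n) (u v : 'cV[C]_n) :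
  dotc (A *m u) v = dotc u (adjmx A *m v).
Proof. by rewrite /dotc adjmxM adjmxK mulmxA. Qed.

Lemma dotcC n (u v : 'cV[C]_n) : dotc v u = (dotc u v)^*.
Proof.
rewrite !dotcE rmorph_sum; apply: eq_bigr => j _.
by rewrite rmorphM /= conjcK mulrC.
Qed.

Lemma dotcDl n (u w v : 'cV[C]_n) : dotc (u + w) v = dotc u v + dotc w v.
Proof. by rewrite /dotc mulmxDr mxE. Qed.

Lemma dotcZl n a (u v : 'cV[C]_n) : dotc (a *: u) v = a * dotc u v.
Proof. by rewrite /dotc -scalemxAr mxE. Qed.

Lemma dotc_suml n (I : finType) (F : I -> 'cV[C]_n) v :
  dotc (\sum_i F i) v = \sum_i dotc (F i) v.
Proof. by rewrite /dotc mulmx_sumr summxE. Qed.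

Lemma dotc_ge0 n (u : 'cV[C]_n) : 0 <= dotc u u.
Proof. by rewrite dotc_dotmx dnorm_ge0. Qed.

Lemma normC_dotc_le n (u v : 'cV[C]_n) :
  `|dotc u v| <= sqrtC (dotc u u) * sqrtC (dotc v v).
Proof. by rewrite !dotc_dotmx; apply: (CauchySchwarz_sqrt (@dotmx C n) _ _).1. Qed.

Definition sqnorm n (u : 'cV[C]_n) : R := Re (dotc u u).
Definition redot n (u v : 'cV[C]_n) : R := Re (dotc u v).

Lemma dotcc n (u : 'cV[C]_n) : dotc u u = (sqnorm u)%:C.
Proof. by have /ger0_Im := dotc_ge0 u; rewrite /sqnorm; case: (dotc u u) => a b /= ->. Qed.

Lemma sqnorm_ge0 n (u : 'cV[C]_n) : 0 <= sqnorm u.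
Proof. by rewrite -ler0c -dotcc dotc_ge0. Qed.

Lemma sqnorm0 n : sqnorm (0 : 'cV[C]_n) = 0.
Proof. by rewrite /sqnorm /dotc mulmx0 mxE. Qed.

Lemma vnorm_sqnorm n (u : 'cV[C]_n) : vnorm u = (Num.sqrt (sqnorm u))%:C.
Proof.
rewrite /vnorm -/(dotc u u) dotcc -{1}(sqr_sqrtr (sqnorm_ge0 u)) rmorphXn sqrCK //.
by rewrite ler0c sqrtr_ge0.
Qed.

Lemma normC_dotc_le_sqnorm n (u v : 'cV[C]_n) :
  `|dotc u v| <= (Num.sqrt (sqnorm u) * Num.sqrt (sqnorm v))%:C.
Proof. by rewrite rmorphM /= -!vnorm_sqnorm; apply: normC_dotc_le. Qed.

Lemma le_vnorm_sqnorm n (eps : R) (u v : 'cV[C]_n) :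
  0 <= eps -> eps%:C * vnorm v <= vnorm u -> eps ^+ 2 * sqnorm v <= sqnorm u.
Proof.
move=> eps_ge0; rewrite !vnorm_sqnorm -rmorphM lecR => eps_le.
rewrite -(sqr_sqrtr (sqnorm_ge0 v)) -(sqr_sqrtr (sqnorm_ge0 u)) -exprMn.
by rewrite ler_sqr // nnegrE ?mulr_ge0 ?sqrtr_ge0.
Qed.

Lemma redotC n (u v : 'cV[C]_n) : redot v u = redot u v.
Proof. by rewrite /redot dotcC ReJ. Qed.

Lemma redotDl n (u w v : 'cV[C]_n) : redot (u + w) v = redot u v + redot w v.
Proof. by rewrite /redot dotcDl ReD. Qed.

Lemma redotNl n (u v : 'cV[C]_n) : redot (- u) v = - redot u v.
Proof. by rewrite /redot -scaleN1r dotcZl mulN1r ReN. Qed.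

Lemma redotZl n t (u v : 'cV[C]_n) : redot (t%:C *: u) v = t * redot u v.
Proof. by rewrite /redot dotcZl ReMr. Qed.

Lemma redotDr n (u w v : 'cV[C]_n) : redot v (u + w) = redot v u + redot v w.
Proof. by rewrite redotC redotDl !(redotC v). Qed.

Lemma redotNr n (u v : 'cV[C]_n) : redot v (- u) = - redot v u.
Proof. by rewrite redotC redotNl redotC. Qed.

Lemma redotZr n t (u v : 'cV[C]_n) : redot v (t%:C *: u) = t * redot v u.
Proof. by rewrite redotC redotZl redotC. Qed.

Lemma redot_adjmx n (A : 'M[C]_n) (u v : 'cV[C]_n) :
  redot (A *m u) v = redot u (adjmx A *m v).
Proof. by rewrite /redot dotc_adjmx. Qed.

Lemma sqnormE n (u : 'cV[C]_n) : sqnorm u = redot u u.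
Proof. by []. Qed.

Lemma sqnormD n (u w : 'cV[C]_n) :
  sqnorm (u + w) = sqnorm u + sqnorm w + 2 * redot u w.
Proof. by rewrite !sqnormE redotDl !redotDr (redotC w u); ring. Qed.

Lemma sqnormN n (u : 'cV[C]_n) : sqnorm (- u) = sqnorm u.
Proof. by rewrite !sqnormE redotNl redotNr opprK. Qed.

Lemma sqnormZ n t (u : 'cV[C]_n) : sqnorm (t%:C *: u) = t ^+ 2 * sqnorm u.
Proof. by rewrite !sqnormE redotZl redotZr mulrA -expr2. Qed.

Lemma sqnormB n (u w : 'cV[C]_n) :
  sqnorm (u - w) = sqnorm u + sqnorm w - 2 * redot u w.
Proof. by rewrite sqnormD sqnormN redotNr mulrN. Qed.

Lemma sqnorm_parallelogram n (u w : 'cV[C]_n) :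
  sqnorm (u + w) + sqnorm (u - w) = 2 * (sqnorm u + sqnorm w).
Proof. by rewrite sqnormD sqnormB; ring. Qed.

Lemma dotc_delta n (A : 'M[C]_n) i j :
  dotc (A *m delta_mx j 0) (delta_mx i 0) = A i j.
Proof. by rewrite /dotc adjmx_delta mulmxA -rowE -colE !mxE. Qed.

Lemma mxtrace_dotc n (A : 'M[C]_n) :
  \tr A = \sum_j dotc (A *m delta_mx j 0) (delta_mx j 0).
Proof. by apply: eq_bigr => j _; rewrite dotc_delta. Qed.

Lemma sqnorm_delta n (j : 'I_n) : sqnorm (delta_mx j 0 : 'cV[C]_n) = 1.
Proof. by rewrite /sqnorm -{1}[delta_mx j 0]mul1mx dotc_delta mxE eqxx. Qed.

Lemma sqnorm_subr_le n (x z : 'cV[C]_n) (m S : R) :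
  1 <= m -> sqnorm z <= m * S -> sqnorm (x - z) <= (m + 1) * (sqnorm x + S).
Proof.
move=> m_ge1 z_le.
have m_gt0 : 0 < m by apply: lt_le_trans m_ge1.
(* expand [0 <= |m x + z|^2] to control the cross term *)
have cross := sqnorm_ge0 (m%:C *: x + z).
rewrite sqnormD sqnormZ redotZl in cross.
have Z_le : sqnorm z <= m * sqnorm z by rewrite ler_peMl ?sqnorm_ge0.
have mZ_le : m * sqnorm z <= m * (m * S) by rewrite ler_pM2l.
rewrite sqnormB -(ler_pM2l m_gt0).
have := sqnorm_ge0 x; nra.
Qed.

End InnerProduct.

Section SelfAdjointBound.
Variables (R : realType) (n : nat) (T : 'M[R[i]]_n) (mu : R).
Hypotheses (mu_gt0 : 0 < mu) (T_herm : adjmx T = T).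
Hypothesis T_numrange : forall v, `|redot (T *m v) v| <= mu * sqnorm v.

Lemma redot_herm_polar u w :
  redot (T *m (u + w)) (u + w) - redot (T *m (u - w)) (u - w) =
  4 * redot (T *m u) w.
Proof.
have Twu : redot (T *m w) u = redot (T *m u) w by rewrite redot_adjmx T_herm redotC.
rewrite !mulmxDr mulmxN !redotDl !redotDr !redotNl !redotNr Twu; ring.
Qed.

Lemma sqnorm_herm_le u : sqnorm (T *m u) <= mu ^+ 2 * sqnorm u.
Proof.
set X := sqnorm (T *m u); set Y := sqnorm u.
(* polarize with [mu u] and [T u], so that no division by [mu] is needed *)
pose v := mu%:C *: u.
have Tvw : redot (T *m v) (T *m u) = mu * X by rewrite -scalemxAr redotZl.
have : 4 * (mu * X) <= mu * (sqnorm (v + T *m u) + sqnorm (v - T *m u)).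
  rewrite -Tvw -redot_herm_polar mulrDr.
  have /ler_normlP[_ +] := T_numrange (v + T *m u).
  have /ler_normlP[+ _] := T_numrange (v - T *m u).
  lra.
rewrite sqnorm_parallelogram sqnormZ -/X -/Y => h.
have : mu * (2 * X) <= mu * (2 * (mu ^+ 2 * Y)) by lra.
by rewrite ler_pM2l // ler_pM2l.
Qed.

Lemma sqnorm_herm_expr_le N u : sqnorm (T ^+ N *m u) <= (mu ^+ N) ^+ 2 * sqnorm u.
Proof.
elim: N => [|N IH]; first by rewrite expr0 mul1mx expr1n mul1r.
rewrite (exprS T) -mulmxE -mulmxA (le_trans (sqnorm_herm_le _)) //.
by rewrite (exprS mu N) exprMn -[X in _ <= X]mulrA ler_pM2l ?exprn_gt0.
Qed.

Lemma dotc_herm_expr_le N e f :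
  `|dotc (T ^+ N *m e) f| <=
    (mu ^+ N * Num.sqrt (sqnorm e) * Num.sqrt (sqnorm f))%:C.
Proof.
apply: le_trans (normC_dotc_le_sqnorm _ _) _.
rewrite lecR ler_wpM2r ?sqrtr_ge0 //.
have muN_ge0 : 0 <= mu ^+ N by rewrite exprn_ge0 ?ltW.
rewrite -(ger0_norm muN_ge0) -sqrtr_sqr -sqrtrM ?sqr_ge0 // ler_sqrt.
  exact: sqnorm_herm_expr_le.
by rewrite mulr_ge0 ?sqr_ge0 ?sqnorm_ge0.
Qed.

Lemma mxtrace_herm_expr_le N : `|\tr (T ^+ N)| <= (n%:R * mu ^+ N)%:C.
Proof.
rewrite mxtrace_dotc (le_trans (ler_norm_sum _ _ _)) //.
have dotc_le j : `|dotc (T ^+ N *m delta_mx j 0) (delta_mx j 0)| <= (mu ^+ N)%:C.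
  by rewrite (le_trans (dotc_herm_expr_le _ _ _)) // sqnorm_delta sqrtr1 !mulr1.
rewrite (le_trans (ler_sum _ (fun j _ => dotc_le j))) //.
by rewrite sumr_const card_ord -rmorphMn /= mulr_natl.
Qed.

End SelfAdjointBound.

Section GroupTheory.
Variable G : Grp.

Lemma gmulgV (x : G) : gmul x (ginv x) = gone G.
Proof.
transitivity (gmul (gmul (ginv (ginv x)) (ginv x)) (gmul x (ginv x))).
  by rewrite gmulVg gmul1g.
by rewrite -gmulA (gmulA (ginv x)) gmulVg gmul1g gmulVg.
Qed.

Lemma gmulg1 (x : G) : gmul x (gone G) = x.
Proof. by rewrite -(gmulVg x) gmulA gmulgV gmul1g. Qed.

Lemma ginv_inj : injective (@ginv G).
Proof. by move=> x y Exy; rewrite -[x]gmulg1 -(gmulVg y) -Exy gmulA gmulgV gmul1g. Qed.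

Lemma hom_gone (gT : finGroupType) (rho : G -> gT) : is_hom rho -> rho (gone G) = 1%g.
Proof.
move=> rhoM; apply: (mulgI (rho (gone G))).
by rewrite mulg1 -rhoM gmul1g.
Qed.

End GroupTheory.

Definition hecke (R : realType) (G : Grp) (n k : nat) (U : G -> 'M[R[i]]_n)
  (s : 'I_k -> G) : 'M[R[i]]_n := \sum_a U (s a).

Section UnitaryRep.
Variables (R : realType) (G : Grp) (n : nat) (U : G -> 'M[R[i]]_n).
Hypothesis U_unitary : unitary_rep U.

Lemma rep_gone : U (gone G) = 1%:M.
Proof. by case: U_unitary => [[]]. Qed.

Lemma repM x y : U (gmul x y) = U x *m U y.
Proof. by case: U_unitary => [[_ ->]]. Qed.

Lemma rep_gprod (l : seq G) : U (gprod l) = \prod_(x <- l) U x.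
Proof.
elim: l => [|x l IH]; first by rewrite big_nil rep_gone.
by rewrite big_cons /= repM IH mulmxE.
Qed.

Lemma rep_adjmx x : adjmx (U x) = U (ginv x).
Proof.
case: U_unitary => _ /(_ x) adjUU.
have UadjU : U x *m adjmx (U x) = 1%:M by apply: mulmx1C.
by rewrite -[adjmx _]mul1mx -rep_gone -(gmulVg x) repM -mulmxA UadjU mulmx1.
Qed.

Lemma sqnorm_rep x v : sqnorm (U x *m v) = sqnorm v.
Proof. by case: U_unitary => _ adjUU; rewrite /sqnorm dotc_adjmx mulmxA adjUU mul1mx. Qed.

Lemma sqnorm_word_le (l : seq G) v :
  sqnorm (v - ((-1) ^+ size l)%:C *: (U (gprod l) *m v)) <=
  (size l)%:R * \sum_(x <- l) sqnorm (v + U x *m v).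
Proof.
elim: l => [|x l IH] /=.
  by rewrite expr0 rep_gone mul1mx scale1r subrr sqnorm0 mul0r.
rewrite big_cons.
set y := v - ((-1) ^+ size l)%:C *: (U (gprod l) *m v).
(* telescoping: the new error term is [v + U x v] minus [U x] applied to the old one *)
have -> : v - ((-1) ^+ (size l).+1)%:C *: (U (gmul x (gprod l)) *m v) =
          (v + U x *m v) - U x *m y.
  rewrite /y exprS mulN1r rmorphN scaleNr opprK repM mulmxBr -scalemxAr mulmxA.
  by rewrite opprB [_ *: _ - _]addrC addrA addrK.
have Uy_le : sqnorm (U x *m y) <= (size l)%:R * \sum_(x <- l) sqnorm (v + U x *m v).
  by rewrite sqnorm_rep.
case: l IH @y Uy_le => [|x' l] _ y Uy_le.
  by rewrite /y /= expr0 rep_gone mul1mx scale1r subrr mulmx0 subr0 big_nil addr0 mul1r.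
apply: le_trans (sqnorm_subr_le _ _ Uy_le) _; first by rewrite ler1n.
by rewrite natr1.
Qed.

Variables (k : nat) (s : 'I_k -> G).

Lemma sum_word_val N :
  \sum_(w : {ffun 'I_N -> 'I_k}) U (word_val s w) = hecke U s ^+ N.
Proof.
rewrite /hecke -[in RHS](card_ord N) -prodr_const bigA_distr_bigA.
apply: eq_bigr => w _.
by rewrite rep_gprod big_map enumT [index_enum _]unlock.
Qed.

Lemma hecke_herm : symmetric_set s -> injective s -> adjmx (hecke U s) = hecke U s.
Proof.
move=> /boolp.choice[inv s_inv] s_inj.
have inv_inj : injective inv.
  by move=> a b Eab; apply/s_inj/ginv_inj; rewrite -!s_inv Eab.
rewrite /hecke adjmx_sum [in RHS](reindex_inj inv_inj).
by apply: eq_bigr => a _; rewrite rep_adjmx s_inv.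
Qed.

Lemma odd_relator_sqnorm_le c (w : {ffun 'I_c -> 'I_k}) v :
  odd c -> word_val s w = gone G ->
  4 * sqnorm v <= c%:R ^+ 2 * \sum_a sqnorm (v + U (s a) *m v).
Proof.
move=> c_odd w_rel.
have := sqnorm_word_le [seq s (w j) | j <- enum 'I_c] v.
rewrite size_map size_enum_ord -/(word_val s w) w_rel rep_gone mul1mx.
rewrite -signr_odd c_odd expr1 rmorphN1 scaleN1r opprK.
have -> : v + v = 2%:C *: v by rewrite rmorph_nat scaler_nat mulr2n.
rewrite sqnormZ big_map big_enum /= -natrX => /le_trans; apply.
have term_le j : sqnorm (v + U (s (w j)) *m v) <= \sum_a sqnorm (v + U (s a) *m v).
  by rewrite (bigD1 (w j)) //= lerDl sumr_ge0 // => a _; exact: sqnorm_ge0.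
rewrite expr2 -mulrA; apply: ler_wpM2l => //.
by rewrite (le_trans (ler_sum _ (fun j _ => term_le j))) // sumr_const card_ord mulr_natl.
Qed.

Lemma redot_hecke v : redot (hecke U s *m v) v = \sum_a redot (U (s a) *m v) v.
Proof. by rewrite /hecke mulmx_suml /redot dotc_suml Re_sum. Qed.

Lemma sum_sqnorm_rep_subr v :
  \sum_a sqnorm (U (s a) *m v - v) = 2 * k%:R * sqnorm v - 2 * redot (hecke U s *m v) v.
Proof.
under eq_bigr do rewrite sqnormB sqnorm_rep.
by rewrite sumrB sumr_const card_ord -mulr_sumr -redot_hecke -mulr_natr; ring.
Qed.

Lemma sum_sqnorm_rep_addr v :
  \sum_a sqnorm (v + U (s a) *m v) = 2 * k%:R * sqnorm v + 2 * redot (hecke U s *m v) v.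
Proof.
under eq_bigr do rewrite sqnormD sqnorm_rep redotC.
by rewrite big_split /= sumr_const card_ord -mulr_sumr -redot_hecke -mulr_natr; ring.
Qed.

Lemma hecke_numrange eps d c (w : {ffun 'I_c -> 'I_k}) :
  odd c -> word_val s w = gone G ->
  (forall v, v != 0 -> exists a, eps%:C * vnorm v <= vnorm (U (s a) *m v - v)) ->
  0 <= eps -> 2 * d <= eps ^+ 2 -> d * c%:R ^+ 2 <= 2 ->
  forall v, `|redot (hecke U s *m v) v| <= (k%:R - d) * sqnorm v.
Proof.
move=> c_odd w_rel tau eps_ge0 d_eps d_c v.
have [->|v_neq0] := eqVneq v 0.
  by rewrite sqnorm0 mulr0 /redot /dotc !mulmx0 mxE /= normr0.
have upper : eps ^+ 2 * sqnorm v <= 2 * k%:R * sqnorm v - 2 * redot (hecke U s *m v) v.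
  have [a /(le_vnorm_sqnorm eps_ge0) eps_le] := tau v v_neq0.
  rewrite -sum_sqnorm_rep_subr (bigD1 a) //= (le_trans eps_le) // lerDl.
  by rewrite sumr_ge0 // => b _; exact: sqnorm_ge0.
have := odd_relator_sqnorm_le v c_odd w_rel; rewrite sum_sqnorm_rep_addr => lower.
have c_gt0 : 0 < c%:R ^+ 2 :> R by rewrite exprn_gt0 // ltr0n; case: (c) c_odd.
have X_ge0 := sqnorm_ge0 v.
set X := sqnorm v in X_ge0 upper lower *; set r := redot _ v in upper lower *.
have dX_le : c%:R ^+ 2 * (2 * d * X) <= c%:R ^+ 2 * (2 * k%:R * X + 2 * r) by nra.
rewrite ler_pM2l // in dX_le.
rewrite ler_norml; apply/andP; split; nra.
Qed.

End UnitaryRep.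

Lemma ipH_dotc (R : realType) n (H : 'M[R[i]]_n) u v : ipH H u v = dotc (H *m u) v.
Proof. by rewrite /ipH /dotc mulmxA. Qed.

Lemma normH_ge0 (R : realType) n (H : 'M[R[i]]_n) v : inner_product_mx H -> 0 <= normH H v.
Proof.
case=> _ H_pos; rewrite sqrtC_ge0.
by have [->|/H_pos/ltW//] := eqVneq v 0; rewrite /ipH !mulmx0 mxE.
Qed.

Lemma inner_product_mx_factor (R : realType) n (H : 'M[R[i]]_n) :
  inner_product_mx H -> exists2 L : 'M[R[i]]_n, L \in unitmx & adjmx L *m L = H.
Proof.
case=> H_herm H_pos.
have H_normal : H \is normalmx by apply/normalmxP; rewrite -adjmx_trC H_herm.
have /orthomx_spectralP := H_normal.
set P := spectralmx H; set d := spectral_diag H.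
have P_unitary : P \is unitarymx := spectral_unitarymx H.
have PadjP : P *m adjmx P = 1%:M by rewrite adjmx_trC; apply/unitarymxP.
rewrite invmx_unitary // -adjmx_trC => H_diag.
have d_gt0 j : 0 < d 0 j.
  have v_neq0 : adjmx P *m (delta_mx j 0 : 'cV_n) != 0.
    apply/negP => /eqP /(congr1 (mulmx P)); rewrite mulmxA PadjP mul1mx mulmx0.
    by move=> /matrixP/(_ j 0); rewrite !mxE !eqxx => /eqP; rewrite oner_eq0.
  have := H_pos _ v_neq0; rewrite ipH_dotc H_diag -dotc_adjmx !mulmxA PadjP mul1mx.
  by rewrite -(mulmxA (diag_mx d)) PadjP mulmx1 dotc_delta mxE eqxx mulr1n.
pose sq := \row_j sqrtC (d 0 j).
exists (diag_mx sq *m P).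
  rewrite unitmx_mul (unitarymx_unit P_unitary) andbT unitmxE det_diag unitfE.
  by apply/prodf_neq0 => j _; rewrite mxE sqrtC_eq0 gt_eqF.
have sqrt_real j : (sqrtC (d 0 j))^* = sqrtC (d 0 j).
  by apply/CrealP; rewrite ger0_real // sqrtC_ge0 ltW.
have sq_sqr : adjmx (diag_mx sq) *m diag_mx sq = diag_mx d.
  apply/matrixP => a b; rewrite /adjmx map_diag_mx tr_diag_mx mul_diag_mx !mxE.
  have [->|ab] := eqVneq a b; last by rewrite !mulr0n mulr0.
  by rewrite /= sqrt_real !mulr1n -expr2 sqrtCK.
by rewrite adjmxM -mulmxA (mulmxA (adjmx (diag_mx sq))) sq_sqr mulmxA H_diag.
Qed.

Section Conjugation.
Variables (R : realType) (G : Grp) (n : nat) (pi : G -> 'M[R[i]]_n).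
Variables (H L : 'M[R[i]]_n).
Hypotheses (L_unit : L \in unitmx) (LL_H : adjmx L *m L = H).
Hypotheses (pi_rep : mx_rep pi) (H_invariant : invariant_ip H pi).

Definition conj_rep x := L *m pi x *m invmx L.

Lemma ipH_conj u v : ipH H u v = dotc (L *m u) (L *m v).
Proof. by rewrite ipH_dotc -LL_H -mulmxA dotc_adjmx adjmxK. Qed.

Lemma rep_invariant_adjmx x : adjmx (pi x) *m H *m pi x = H.
Proof.
apply/matrixP => i j; rewrite -[LHS]dotc_delta -[RHS]dotc_delta.
by rewrite -!mulmxA dotc_adjmx adjmxK -ipH_dotc H_invariant ipH_dotc.
Qed.

Lemma conj_rep_unitary : unitary_rep conj_rep.
Proof.
case: pi_rep => pi1 piM; split; first split.
- by rewrite /conj_rep pi1 mulmx1 mulmxV.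
- by move=> x y; rewrite /conj_rep piM !mulmxA mulmxKV.
move=> x; rewrite /conj_rep !adjmxM.
transitivity (adjmx (invmx L) *m (adjmx (pi x) *m H *m pi x) *m invmx L).
  by rewrite -LL_H !mulmxA.
by rewrite rep_invariant_adjmx -LL_H !mulmxA -adjmxM mulmxV // adjmx1 mul1mx mulmxV.
Qed.

Lemma conj_rep_mulmx x (e : 'cV[R[i]]_n) : conj_rep x *m (L *m e) = L *m (pi x *m e).
Proof. by rewrite /conj_rep mulmxA mulmxKV // mulmxA. Qed.

Lemma mxtrace_conj_rep x : \tr (conj_rep x) = \tr (pi x).
Proof. by rewrite /conj_rep -mulmxA mxtrace_mulC mulmxKV. Qed.

Lemma conj_rep_no_trivial_sub : no_trivial_sub pi -> no_trivial_sub conj_rep.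
Proof.
move=> pi_nt v v_fixed.
suff : invmx L *m v = 0 by move=> Lv0; rewrite -(mulKVmx L_unit v) Lv0 mulmx0.
apply: pi_nt => x.
by rewrite -{2}(v_fixed x) /conj_rep !mulmxA mulVmx // mul1mx -!mulmxA.
Qed.

Lemma conj_rep_ker (gT : finGroupType) (rho : G -> gT) :
  is_hom rho -> factors_through rho pi -> forall x, rho x = 1%g -> conj_rep x = 1%:M.
Proof.
move=> rho_hom [sigma pi_sigma] x rho_x.
have pi_x : pi x = 1%:M by rewrite pi_sigma rho_x -(hom_gone rho_hom) -pi_sigma; case: pi_rep.
by rewrite /conj_rep pi_x mulmx1 mulmxV.
Qed.

Lemma normH_conj v : normH H v = (Num.sqrt (sqnorm (L *m v)))%:C.
Proof. by rewrite /normH ipH_conj -vnorm_sqnorm. Qed.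

Variables (k : nat) (s : 'I_k -> G).

Lemma sum_ipH_word_val N e f :
  \sum_(w : {ffun 'I_N -> 'I_k}) ipH H (pi (word_val s w) *m e) f =
  dotc (hecke conj_rep s ^+ N *m (L *m e)) (L *m f).
Proof.
rewrite -(sum_word_val conj_rep_unitary) mulmx_suml dotc_suml.
by apply: eq_bigr => w _; rewrite ipH_conj conj_rep_mulmx.
Qed.

Lemma sum_mxtrace_word_val N :
  \sum_(w : {ffun 'I_N -> 'I_k}) \tr (pi (word_val s w)) = \tr (hecke conj_rep s ^+ N).
Proof.
rewrite -(sum_word_val conj_rep_unitary) raddf_sum.
by apply: eq_bigr => w _; rewrite /= mxtrace_conj_rep.
Qed.

End Conjugation.

Section SpectralGap.
Variables (R : realType) (eps : R) (c : nat).

(* [c.+2] rather than [c] keeps the gap positive and below [1] for every [c] *)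
Definition spectral_gap : R := Num.min (eps ^+ 2 / 2) ((c.+2)%:R ^+ 2)^-1.

Let spectral_gap_le : spectral_gap <= ((c.+2)%:R ^+ 2)^-1.
Proof. by rewrite ge_min lexx orbT. Qed.

Lemma spectral_gap_gt0 : 0 < eps -> 0 < spectral_gap.
Proof. by move=> eps_gt0; rewrite lt_min !divr_gt0 ?invr_gt0 ?exprn_gt0. Qed.

Lemma spectral_gap_eps : 2 * spectral_gap <= eps ^+ 2.
Proof. by rewrite mulrC -ler_pdivlMr // ge_min lexx. Qed.

Lemma spectral_gap_relator : spectral_gap * c%:R ^+ 2 <= 2.
Proof.
rewrite (le_trans (ler_wpM2r (exprn_ge0 2 (ler0n _ c)) spectral_gap_le)) //.
by rewrite mulrC ler_pdivrMr ?exprn_gt0 // -!natrX -natrM ler_nat; nia.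
Qed.

Lemma spectral_gap_lt1 : spectral_gap < 1.
Proof.
by rewrite (le_lt_trans spectral_gap_le) // invf_lt1 ?exprn_gt0 // -natrX ltr1n; nia.
Qed.

End SpectralGap.

Section DecayExponent.
Variables (R : realType) (K mu : R).
Hypotheses (K_ge1 : 1 <= K) (mu_gt0 : 0 < mu).

(* [ln (K + 1)] rather than [ln K] keeps the exponent positive when [K = 1] *)
Definition decay_exponent : R := ln (K / mu) / ln (K + 1).

Let K_gt0 : 0 < K. Proof. exact: lt_le_trans K_ge1. Qed.
Let lnK1_gt0 : 0 < ln (K + 1). Proof. by rewrite ln_gt0 // ltrDr. Qed.

Lemma decay_exponent_gt0 : mu < K -> 0 < decay_exponent.
Proof. by move=> mu_lt; rewrite divr_gt0 // ln_gt0 // ltr_pdivlMr // mul1r. Qed.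

Lemma exprn_le_powR_decay N :
  mu <= K -> mu ^+ N <= (K ^+ N) `^ (1 - decay_exponent).
Proof.
move=> mu_le.
have a_ge0 : 0 <= decay_exponent.
  by rewrite divr_ge0 ?(ltW lnK1_gt0) // ln_ge0 // ler_pdivlMr // mul1r.
have a_lnK1 : decay_exponent * ln (K + 1) = ln K - ln mu.
  by rewrite /decay_exponent divfK ?gt_eqF // ln_div // posrE.
have a_lnK : decay_exponent * ln K <= decay_exponent * ln (K + 1).
  by rewrite ler_wpM2l // ler_ln ?posrE ?lerDl ?addr_gt0.
rewrite /powR gt_eqF ?exprn_gt0 // -[mu ^+ N]lnK ?posrE ?exprn_gt0 // ler_expR.
rewrite !lnXn // mulrnAr lerMn2r; apply/orP; right.
rewrite a_lnK1 in a_lnK; lra.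
Qed.

End DecayExponent.

Lemma sum_ffun_ord0 (V : nmodType) N (F : {ffun 'I_N -> 'I_0} -> V) :
  (0 < N)%N -> \sum_w F w = 0.
Proof. by move=> N_gt0; apply: big1 => w; case: (w (Ordinal N_gt0)). Qed.

Unset Implicit Arguments.

Theorem proposition9p2 (R : realType) (Gam : Grp) (k c : nat) (eps : R) :
  0 < eps ->
  exists alpha : R, 0 < alpha /\
  forall (I : Type) (gT : I -> finGroupType) (rho : forall i, Gam -> gT i)
         (s : 'I_k -> Gam),
    (forall i, is_hom (rho i)) ->
    (forall i (y : gT i), exists x, rho i x = y) ->
    injective s -> symmetric_set s -> generates s ->
    odd c -> (exists w : {ffun 'I_c -> 'I_k}, word_val s w = gone Gam) ->
    tau_constant rho s eps ->
    forall (i : I) (n : nat) (pi : Gam -> 'M[R[i]]_n) (H : 'M[R[i]]_n),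
      mx_rep pi -> factors_through (rho i) pi -> no_trivial_sub pi ->
      inner_product_mx H -> invariant_ip H pi ->
      forall (e f : 'cV[R[i]]_n) (N : nat), (0 < N)%N ->
        `| \sum_(w : {ffun 'I_N -> 'I_k}) ipH H (pi (word_val s w) *m e) f |
          <= normH H e * normH H f
             * ((#|{ffun 'I_N -> 'I_k}|%:R : R) `^ (1 - alpha))%:C
        /\
        `| \sum_(w : {ffun 'I_N -> 'I_k}) \tr (pi (word_val s w)) |
          <= n%:R * ((#|{ffun 'I_N -> 'I_k}|%:R : R) `^ (1 - alpha))%:C.
Proof.
move=> eps_gt0.
have [-> | k_gt0] := posnP k.
  exists 1; split=> // I gT rho s _ _ _ _ _ _ _ _ i n pi H _ _ _ H_ip _ e f N N_gt0.
  by rewrite !sum_ffun_ord0 // normr0 !mulr_ge0 ?normH_ge0 ?ler0n ?ler0c ?powR_ge0.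
pose mu := k%:R - spectral_gap eps c.
have k_ge1 : 1 <= k%:R :> R by rewrite ler1n.
have mu_gt0 : 0 < mu by rewrite subr_gt0 (lt_le_trans (spectral_gap_lt1 _ _)).
have mu_lt_k : mu < k%:R by rewrite ltrBlDr ltrDl spectral_gap_gt0.
exists (decay_exponent k%:R mu); split; first exact: decay_exponent_gt0.
move=> I gT rho s rho_hom _ s_inj s_sym _ c_odd [w w_rel] tau i n pi H pi_rep pi_rho pi_nt.
move=> H_ip H_inv e f N _.
have [L L_unit LL_H] := inner_product_mx_factor H_ip.
have U_unitary := conj_rep_unitary L_unit LL_H pi_rep H_inv.
have U_tau := tau i n _ U_unitary (conj_rep_ker L_unit pi_rep (rho_hom i) pi_rho)
  (conj_rep_no_trivial_sub L_unit pi_nt).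
have T_herm := hecke_herm U_unitary s_sym s_inj.
have T_numrange := hecke_numrange U_unitary c_odd w_rel U_tau (ltW eps_gt0)
  (spectral_gap_eps _ _) (spectral_gap_relator _ _).
have decay := exprn_le_powR_decay k_ge1 mu_gt0 N (ltW mu_lt_k).
rewrite card_ffun !card_ord natrX (sum_ipH_word_val L_unit LL_H pi_rep H_inv).
rewrite (sum_mxtrace_word_val L_unit LL_H pi_rep H_inv) !(normH_conj LL_H); split.
  apply: le_trans (dotc_herm_expr_le mu_gt0 T_herm T_numrange N _ _) _.
  rewrite -!rmorphM lecR.
  have := mulr_ge0 (sqrtr_ge0 (sqnorm (L *m e))) (sqrtr_ge0 (sqnorm (L *m f))); nra.
apply: le_trans (mxtrace_herm_expr_le mu_gt0 T_herm T_numrange N) _.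
by rewrite -(rmorph_nat (real_complex R)) -rmorphM lecR ler_wpM2l.
Qed.
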